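(* Let $L = L_p + \varepsilon L_d \in \mathbb{DH}[t]$ be a line polynomial, let $h, \ell \in \mathbb{R}[t]$ be nonzero, and let $Q = q_0 + q_1\mathbf{i} + q_2\mathbf{j} + q_3\mathbf{k} \in \mathbb{H}[t]$ be such that $P = Qh\ell$ satisfies $P\mathbf{k}\overline{P} = hL_p$. Write $M = m_1\mathbf{i} + m_2\mathbf{j} + m_3\mathbf{k} = Q\mathbf{k}\overline{Q}$ and $k_5\mathbf{i} + k_6\mathbf{j} + k_7\mathbf{k} = K_d := L_d/\ell$, and assume $m_3 \neq 0$ and $q_3 \neq 0$. Then all solutions $D = d_0 + d_1\mathbf{i} + d_2\mathbf{j} + d_3\mathbf{k}$, with $d_0,\dots,d_3$ in the field of real rational functions $\mathbb{R}(t)$, of the equation $$-P\mathbf{k}\overline{D} - D\mathbf{k}\overline{P} = hL_d$$ are given by $$d_1 = -\frac{2d_0q_2}{2q_3} + \frac{k_5(q_2^2-q_3^2)+k_6(q_0q_3-q_1q_2)}{2q_3m_3},$$ $$d_2 = \frac{2d_0q_1}{2q_3} + \frac{k_5(-q_0q_3-q_1q_2)+k_6(q_1^2-q_3^2)}{2q_3m_3},$$ $$d_3 = -\frac{2d_0q_0}{2q_3} + \frac{k_5(q_1q_3+q_0q_2)+k_6(q_2q_3-q_0q_1)}{2q_3m_3},$$ where $d_0 \in \mathbb{R}(t)$ is arbitrary.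
   Context: $\mathbb{H}$ denotes the real quaternions with units $\mathbf{i},\mathbf{j},\mathbf{k}$ and conjugation $\overline{p_0 + p_1\mathbf{i} + p_2\mathbf{j} + p_3\mathbf{k}} = p_0 - p_1\mathbf{i} - p_2\mathbf{j} - p_3\mathbf{k}$; $\mathbb{DH} = \mathbb{H} + \varepsilon\mathbb{H}$ with $\varepsilon^2=0$, $\varepsilon$ central. $\mathbb{H}[t]$, $\mathbb{DH}[t]$ are polynomial rings in a real indeterminate $t$ commuting with the coefficients; conjugation acts coefficientwise. A line polynomial is $L = L_p + \varepsilon L_d \in \mathbb{DH}[t]$ with $L_p, L_d \in \mathbb{H}[t]$ vectorial (zero scalar part), $L_p\overline{L_d} + L_d\overline{L_p} = 0$, and $L_p \neq 0$. (In the paper, $\ell$ is the minimal saturating factor of $L_p$: the monic real polynomial of minimal degree with $L_p\ell = P'\mathbf{k}\overline{P'}$ for some $P' \in \mathbb{H}[t]$.) *)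

From HB Require Import structures.
From mathcomp Require Import all_boot all_order all_algebra.
From mathcomp Require Import fraction.
Set Implicit Arguments. Unset Strict Implicit. Unset Printing Implicit Defensive.
Import GRing.Theory Num.Theory.
Local Open Scope ring_scope.

(* Quaternions with coefficients in a commutative ring A:
   Quat a0 a1 a2 a3 = a0 + a1 i + a2 j + a3 k.
   With A = {poly R} this is H[t]; with A = {fraction {poly R}} it is
   the quaternions over the field R(t) of real rational functions. *)
Record quat (A : Type) := Quat { qr : A; qi : A; qj : A; qk : A }.

Section QuatOps.
Variable A : comNzRingType.

Definition qadd (x y : quat A) : quat A :=
  Quat (qr x + qr y) (qi x + qi y) (qj x + qj y) (qk x + qk y).
Definition qopp (x : quat A) : quat A :=
  Quat (- qr x) (- qi x) (- qj x) (- qk x).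
Definition qmul (x y : quat A) : quat A :=
  Quat (qr x * qr y - qi x * qi y - qj x * qj y - qk x * qk y)
       (qr x * qi y + qi x * qr y + qj x * qk y - qk x * qj y)
       (qr x * qj y - qi x * qk y + qj x * qr y + qk x * qi y)
       (qr x * qk y + qi x * qj y - qj x * qi y + qk x * qr y).
Definition qconj (x : quat A) : quat A :=
  Quat (qr x) (- qi x) (- qj x) (- qk x).
Definition qscale (c : A) (x : quat A) : quat A :=
  Quat (c * qr x) (c * qi x) (c * qj x) (c * qk x).
Definition qzero : quat A := Quat 0 0 0 0.
Definition qkk : quat A := Quat 0 0 0 1.
Definition vectorial (x : quat A) : Prop := qr x = 0.
End QuatOps.

Definition qmap (A B : Type) (f : A -> B) (x : quat A) : quat B :=
  Quat (f (qr x)) (f (qi x)) (f (qj x)) (f (qk x)).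

(* Line polynomial L = Lp + eps Ld in DH[t], given by its primal and dual parts. *)
Definition line_poly (R : realFieldType) (Lp Ld : quat {poly R}) : Prop :=
  [/\ vectorial Lp, vectorial Ld,
      qadd (qmul Lp (qconj Ld)) (qmul Ld (qconj Lp)) = qzero _
    & Lp <> qzero _].

Notation tofrac := (@FracField.tofrac _).
Notation "x %:F" := (@FracField.tofrac _ x) : ring_scope.

From HB Require Import structures.
From mathcomp Require Import all_boot all_order all_algebra.
From mathcomp Require Import fraction.
From mathcomp Require Import ring lra.
Set Implicit Arguments. Unset Strict Implicit. Unset Printing Implicit Defensive.
Import GRing.Theory Num.Theory.
Local Open Scope ring_scope.

(* Since [P = h l Q], the equation is [h l] times [-2 vec (Q k conj D) = Kd]: the scalar
   part of [P k conj D + D k conj P] vanishes identically.  For fixed [d0] this is a linear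
   system in [d1, d2, d3] with matrix [q3 I + S], [S] skew, whose determinant
   [q3 (q0^2 + q1^2 + q2^2 + q3^2)] is nonzero over the real polynomials, so there is at
   most one solution.  The displayed one is a solution because [h l^2 M = Lp] and the line
   condition [Lp . Ld = 0] give the compatibility condition [M . Kd = 0]. *)

Local Notation ksand P D := (qmul (qmul P (qkk _)) (qconj D)).

Section QuatTheory.
Variable A : comNzRingType.
Implicit Types (c : A) (x y : quat A).

Definition qvec x : quat A := Quat 0 (qi x) (qj x) (qk x).
Definition vdot x y : A := qi x * qi y + qj x * qj y + qk x * qk y.
Definition qnorm x : A := qr x ^+ 2 + qi x ^+ 2 + qj x ^+ 2 + qk x ^+ 2.

Lemma quatE x : x = Quat (qr x) (qi x) (qj x) (qk x).
Proof. by case: x. Qed.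

Lemma qmulZl c x y : qmul (qscale c x) y = qscale c (qmul x y).
Proof. by case: x y => [? ? ? ?] [? ? ? ?]; rewrite /qmul /qscale /=; congr Quat; ring. Qed.

Lemma qmulZr c x y : qmul x (qscale c y) = qscale c (qmul x y).
Proof. by case: x y => [? ? ? ?] [? ? ? ?]; rewrite /qmul /qscale /=; congr Quat; ring. Qed.

Lemma qconjZ c x : qconj (qscale c x) = qscale c (qconj x).
Proof. by case: x => ? ? ? ?; rewrite /qconj /qscale /=; congr Quat; ring. Qed.

Lemma qscaleA c1 c2 x : qscale c1 (qscale c2 x) = qscale (c1 * c2) x.
Proof. by case: x => ? ? ? ?; rewrite /qscale /=; congr Quat; ring. Qed.

Lemma qvecZ c x : qvec (qscale c x) = qscale c (qvec x).
Proof. by rewrite /qvec /qscale /= mulr0. Qed.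

Lemma vdotZl c x y : vdot (qscale c x) y = c * vdot x y.
Proof. by rewrite /vdot /=; ring. Qed.

Lemma vdotZr c x y : vdot x (qscale c y) = c * vdot x y.
Proof. by rewrite /vdot /=; ring. Qed.

Lemma ksandZl c x y : ksand (qscale c x) y = qscale c (ksand x y).
Proof. by rewrite !qmulZl. Qed.

Lemma ksandZ c x : ksand (qscale c x) (qscale c x) = qscale (c * c) (ksand x x).
Proof. by rewrite ksandZl qconjZ qmulZr qscaleA. Qed.

(* [D k conj P = - conj (P k conj D)]. *)
Lemma ksand_polar x y :
  qadd (qopp (ksand x y)) (qopp (ksand y x)) = qscale (-2) (qvec (ksand x y)).
Proof.
by case: x y => [? ? ? ?] [? ? ? ?]; rewrite /qmul /qadd /qopp /qconj /qvec /qscale /=;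
  congr Quat; ring.
Qed.

Lemma qvec_ksand x y : qvec (ksand x y) =
  Quat 0 (qk x * qi y + qr x * qj y + qi x * qk y + qj x * qr y)
         (- qr x * qi y + qk x * qj y + qj x * qk y - qi x * qr y)
         (- qi x * qi y - qj x * qj y + qk x * qk y + qr x * qr y).
Proof. by rewrite /qvec /qmul /qconj /qkk /=; congr Quat; ring. Qed.

Lemma vectorial_polar_qr x y : vectorial x -> vectorial y ->
  qr (qadd (qmul x (qconj y)) (qmul y (qconj x))) = 2 * vdot x y.
Proof. by case: x y => [? ? ? ?] [? ? ? ?]; rewrite /vectorial /vdot /= => -> ->; ring. Qed.

End QuatTheory.

Section QuatMap.
Variables (A B : comNzRingType) (f : {rmorphism A -> B}).
Implicit Types (c : A) (x y : quat A).

Lemma qmap_qmul x y : qmap f (qmul x y) = qmul (qmap f x) (qmap f y).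
Proof. by rewrite /qmap /qmul /= !(rmorphB, rmorphD, rmorphM). Qed.

Lemma qmap_qconj x : qmap f (qconj x) = qconj (qmap f x).
Proof. by rewrite /qmap /qconj /= !rmorphN. Qed.

Lemma qmap_qkk : qmap f (qkk A) = qkk B.
Proof. by rewrite /qmap /qkk /= rmorph0 rmorph1. Qed.

Lemma qmap_ksand x y : qmap f (ksand x y) = ksand (qmap f x) (qmap f y).
Proof. by rewrite !qmap_qmul qmap_qconj qmap_qkk. Qed.

Lemma qmap_qscale c x : qmap f (qscale c x) = qscale (f c) (qmap f x).
Proof. by rewrite /qmap /qscale /= !rmorphM. Qed.

Lemma vdot_qmap x y : vdot (qmap f x) (qmap f y) = f (vdot x y).
Proof. by rewrite /vdot /= !(rmorphD, rmorphM). Qed.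

Lemma qnorm_qmap x : qnorm (qmap f x) = f (qnorm x).
Proof. by rewrite /qnorm /= !(rmorphD, rmorphXn). Qed.

End QuatMap.

Lemma qscale_inj (F : idomainType) (c : F) : c != 0 -> injective (qscale c).
Proof.
move=> c0 [x0 x1 x2 x3] [y0 y1 y2 y3] [/(mulfI c0) -> /(mulfI c0) -> /(mulfI c0) ->].
by move/(mulfI c0) ->.
Qed.

Lemma exists_nonroot (R : numDomainType) (p : {poly R}) : p != 0 -> exists x, ~~ root p x.
Proof.
move=> p0; set rs := [seq i%:R | i <- iota 0 (size p)] : seq R.
have [/(max_poly_roots p0)|/allPn[x _ px]] := boolP (all (root p) rs); last by exists x.
rewrite map_inj_uniq ?iota_uniq; last exact: (mulrIn (oner_neq0 R)).
by rewrite size_map size_iota ltnn => /(_ isT).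
Qed.

Lemma qnorm_poly_neq0 (R : realDomainType) (Q : quat {poly R}) : qk Q != 0 -> qnorm Q != 0.
Proof.
case/exists_nonroot=> x /rootPf qx; apply/eqP => /(congr1 (horner^~ x)).
rewrite /qnorm !hornerE; have : 0 < (qk Q).[x] ^+ 2 by rewrite exprn_even_gt0 // qx.
by have := sqr_ge0 (qr Q).[x]; have := sqr_ge0 (qi Q).[x]; have := sqr_ge0 (qj Q).[x]; lra.
Qed.

Lemma poly_two_neq0 (R : numDomainType) : (2 : {poly R}) != 0.
Proof. by rewrite -polyC_natr polyC_eq0 pnatr_eq0. Qed.

Lemma line_poly_vdot (R : realFieldType) (Lp Ld : quat {poly R}) :
  line_poly Lp Ld -> vdot Lp Ld = 0.
Proof.
case=> vLp vLd /(congr1 (@qr _)) + _; rewrite vectorial_polar_qr // => /eqP.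
by rewrite mulf_eq0 (negPf (poly_two_neq0 R)) => /eqP.
Qed.

Lemma line_poly_ksand_vdot (R : realFieldType) (Lp Ld Q : quat {poly R}) (h l : {poly R}) :
  line_poly Lp Ld -> h != 0 -> l != 0 ->
  ksand (qscale (h * l) Q) (qscale (h * l) Q) = qscale h Lp -> vdot (ksand Q Q) Ld = 0.
Proof.
move=> /line_poly_vdot Lpd h0 l0 /(congr1 (fun x => vdot x Ld)); rewrite ksandZ !vdotZl Lpd mulr0.
by move/eqP; rewrite !mulf_eq0 (negPf h0) (negPf l0) => /eqP.
Qed.

(* Multiply by the adjugate [c^2 I - c S + v v^T] of [c I + S], where [v = (-s2, s1, -s0)]
   spans the kernel of the skew matrix [S]. *)
Lemma skew_shift_inj (F : idomainType) (c s0 s1 s2 x1 x2 x3 y1 y2 y3 : F) :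
  c * (s0 ^+ 2 + s1 ^+ 2 + s2 ^+ 2 + c ^+ 2) != 0 ->
  c * x1 + s0 * x2 + s1 * x3 = c * y1 + s0 * y2 + s1 * y3 ->
  - s0 * x1 + c * x2 + s2 * x3 = - s0 * y1 + c * y2 + s2 * y3 ->
  - s1 * x1 - s2 * x2 + c * x3 = - s1 * y1 - s2 * y2 + c * y3 ->
  [/\ x1 = y1, x2 = y2 & x3 = y3].
Proof.
move=> /mulfI det_neq0 h1 h2 h3; split; apply: det_neq0.
- transitivity ((c ^+ 2 + s2 ^+ 2) * (c * x1 + s0 * x2 + s1 * x3)
    - (s0 * c + s1 * s2) * (- s0 * x1 + c * x2 + s2 * x3)
    + (s0 * s2 - s1 * c) * (- s1 * x1 - s2 * x2 + c * x3)); first by ring.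
  by rewrite h1 h2 h3; ring.
- transitivity ((s0 * c - s1 * s2) * (c * x1 + s0 * x2 + s1 * x3)
    + (c ^+ 2 + s1 ^+ 2) * (- s0 * x1 + c * x2 + s2 * x3)
    - (s2 * c + s0 * s1) * (- s1 * x1 - s2 * x2 + c * x3)); first by ring.
  by rewrite h1 h2 h3; ring.
- transitivity ((s0 * s2 + s1 * c) * (c * x1 + s0 * x2 + s1 * x3)
    + (s2 * c - s0 * s1) * (- s0 * x1 + c * x2 + s2 * x3)
    + (c ^+ 2 + s0 ^+ 2) * (- s1 * x1 - s2 * x2 + c * x3)); first by ring.
  by rewrite h1 h2 h3; ring.
Qed.

Definition ksand_solution (F : fieldType) (Q K : quat F) (d0 : F) : quat F :=
  let q0 := qr Q in let q1 := qi Q in let q2 := qj Q in let q3 := qk Q in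
  let m3 := qk (ksand Q Q) in let k5 := qi K in let k6 := qj K in
  Quat d0
    (- (2 * d0 * q2) / (2 * q3)
       + (k5 * (q2 ^+ 2 - q3 ^+ 2) + k6 * (q0 * q3 - q1 * q2)) / (2 * q3 * m3))
    ((2 * d0 * q1) / (2 * q3)
       + (k5 * (- (q0 * q3) - q1 * q2) + k6 * (q1 ^+ 2 - q3 ^+ 2)) / (2 * q3 * m3))
    (- (2 * d0 * q0) / (2 * q3)
       + (k5 * (q1 * q3 + q0 * q2) + k6 * (q2 * q3 - q0 * q1)) / (2 * q3 * m3)).

Section KsandSystem.
Variables (F : fieldType) (Q K : quat F).
Hypotheses (two_neq0 : (2 : F) != 0) (q3_neq0 : qk Q != 0) (qnorm_neq0 : qnorm Q != 0).
Hypotheses (m3_neq0 : qk (ksand Q Q) != 0) (K_vec : vectorial K).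
Hypothesis M_orth_K : vdot (ksand Q Q) K = 0.

Lemma ksand_vec_inj D E : qr D = qr E -> qvec (ksand Q D) = qvec (ksand Q E) -> D = E.
Proof.
rewrite [D]quatE [E]quatE !qvec_ksand /= => <- [/addIr h1 /addIr h2 /addIr h3].
have det_neq0 : qk Q * qnorm Q != 0 by rewrite mulf_neq0.
by have [-> -> ->] := skew_shift_inj det_neq0 h1 h2 h3.
Qed.

Lemma ksand_solutionP d0 : qscale (-2) (qvec (ksand Q (ksand_solution Q K d0))) = K.
Proof.
have k7E : qk K = - (qi (ksand Q Q) * qi K + qj (ksand Q Q) * qj K) / qk (ksand Q Q).
  apply: (mulfI m3_neq0); rewrite mulrCA divff // mulr1.
  by apply/eqP; rewrite -addr_eq0 addrC; apply/eqP.
move: m3_neq0; rewrite [RHS]quatE K_vec k7E qvec_ksand /ksand_solution.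
rewrite /qscale /qmul /qconj /qkk /= => m3_neq0'.
congr Quat; field; rewrite ?two_neq0 ?q3_neq0 ?andbT //.
all: by apply: contra_neq m3_neq0' => m3_eq0; rewrite -[RHS]m3_eq0; ring.
Qed.

Lemma ksand_vec_eqP D : qscale (-2) (qvec (ksand Q D)) = K <-> D = ksand_solution Q K (qr D).
Proof.
split=> [D_sol | ->]; last exact: ksand_solutionP.
apply: ksand_vec_inj => //; apply: (@qscale_inj _ (-2)); first by rewrite oppr_eq0.
by rewrite D_sol ksand_solutionP.
Qed.

End KsandSystem.

Theorem lemma3 (R : realFieldType) (Lp Ld : quat {poly R}) (h l : {poly R})
    (Q : quat {poly R}) :
  line_poly Lp Ld -> h != 0 -> l != 0 ->
  let P := qscale (h * l) Q in
  qmul (qmul P (qkk _)) (qconj P) = qscale h Lp ->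
  let M := qmul (qmul Q (qkk _)) (qconj Q) in
  let m3 := (qk M)%:F in
  let q0 := (qr Q)%:F in let q1 := (qi Q)%:F in
  let q2 := (qj Q)%:F in let q3 := (qk Q)%:F in
  let Kd := qscale (l%:F)^-1 (qmap (fun x : {poly R} => x%:F) Ld) in
  let k5 := qi Kd in let k6 := qj Kd in
  qk M != 0 -> qk Q != 0 ->
  forall D : quat {fraction {poly R}},
    let Pf := qmap (fun x : {poly R} => x%:F) P in
    qadd (qopp (qmul (qmul Pf (qkk _)) (qconj D)))
         (qopp (qmul (qmul D (qkk _)) (qconj Pf)))
      = qmap (fun x : {poly R} => x%:F) (qscale h Ld)
    <->
    [/\ qi D = - (2 * qr D * q2) / (2 * q3)
               + (k5 * (q2 ^+ 2 - q3 ^+ 2) + k6 * (q0 * q3 - q1 * q2)) / (2 * q3 * m3),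
        qj D = (2 * qr D * q1) / (2 * q3)
               + (k5 * (- (q0 * q3) - q1 * q2) + k6 * (q1 ^+ 2 - q3 ^+ 2)) / (2 * q3 * m3)
      & qk D = - (2 * qr D * q0) / (2 * q3)
               + (k5 * (q1 * q3 + q0 * q2) + k6 * (q2 * q3 - q0 * q1)) / (2 * q3 * m3)].
Proof.
move=> line h_neq0 l_neq0 P hP M m3 q0 q1 q2 q3 Kd k5 k6 m3_neq0 q3_neq0 D Pf.
have M_orth_Ld := line_poly_ksand_vdot line h_neq0 l_neq0 hP.
have [_ Ld_vec _ _] := line.
pose f : {rmorphism {poly R} -> {fraction {poly R}}} := @FracField.tofrac _.
set Qf := qmap f Q.
have MF : qmap f M = ksand Qf Qf := qmap_ksand f Q Q.
have lF_neq0 : f l != 0 by rewrite tofrac_eq0.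
have hlF_neq0 : f (h * l) != 0 by rewrite tofrac_eq0 mulf_neq0.
have q3F_neq0 : qk Qf != 0 by rewrite tofrac_eq0.
have m3F_neq0 : qk (ksand Qf Qf) != 0 by rewrite -MF tofrac_eq0.
have two_neq0 : (2 : {fraction {poly R}}) != 0.
  by rewrite -(rmorph_nat f) tofrac_eq0 poly_two_neq0.
have qnormF_neq0 : qnorm Qf != 0 by rewrite qnorm_qmap tofrac_eq0 qnorm_poly_neq0.
have Kd_vec : vectorial Kd by rewrite /vectorial /= Ld_vec rmorph0 mulr0.
have MF_orth_Kd : vdot (ksand Qf Qf) Kd = 0.
  by rewrite -MF vdotZr vdot_qmap M_orth_Ld rmorph0 mulr0.
apply: (iff_trans (B := qscale (-2) (qvec (ksand Qf D)) = Kd)).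
  rewrite ksand_polar /Pf /P !(qmap_qscale f) ksandZl qvecZ !qscaleA mulrC -qscaleA.
  rewrite -[f h](mulfK lF_neq0) -rmorphM -qscaleA.
  by split=> [/(qscale_inj hlF_neq0) | ->].
apply: (iff_trans (ksand_vec_eqP two_neq0 q3F_neq0 qnormF_neq0 m3F_neq0 Kd_vec MF_orth_Kd D)).
rewrite {1}[D]quatE /ksand_solution -MF.
by split=> [[-> -> ->] | [-> -> ->]].
Qed.
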